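(* Let $\lambda=(\lambda_1,\dots,\lambda_n)\in\mathbb{R}^n$ with $\lambda_1+\dots+\lambda_n>0$. (i) The following are equivalent: (a) $N(\lambda)=n$; (b) there is no partition $(I_1,I_2)$ of $\{1,\dots,n\}$ into two sets with $s_{I_1}(\lambda)>0$ and $s_{I_2}(\lambda)>0$. (ii) There exists $k\in\mathbb{Z}$ with $\tau^k(\lambda)>0$. Moreover, if there is no partition $(I_1,I_2)$ of $\{1,\dots,n\}$ with $s_{I_1}(\lambda)>0$ and $s_{I_2}(\lambda)>0$, then such an integer $k$ is uniquely determined modulo $n$.
   Context: $s_J(\lambda)=\sum_{i\in J}\lambda_i$. $\delta(\lambda)$ is the minimum of $s_J(\lambda)/|J|$ over subsets $J\subset\{1,\dots,n\}$ with $s_J(\lambda)>0$ (here $\delta(\lambda)>0$ since the total sum is positive), and $N(\lambda)$ is the minimum of $|J|$ over subsets $J$ with $s_J(\lambda)/|J|=\delta(\lambda)$. $\mathfrak{S}_n$ acts on $\mathbb{R}^n$ by $\sigma(\lambda)=(\lambda_{\sigma^{-1}(1)},\dots,\lambda_{\sigma^{-1}(n)})$; $\tau\in\mathfrak{S}_n$ sends $i$ to $i+1$ for $i<n$ and $n$ to $1$. For $\mu\in\mathbb{R}^n$, $\mu>0$ means $\mu_1+\dots+\mu_i>0$ for all $i\in\{1,\dots,n\}$. *)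

From HB Require Import structures.
From mathcomp Require Import all_boot all_order all_algebra all_fingroup.
Set Implicit Arguments. Unset Strict Implicit. Unset Printing Implicit Defensive.
Import Order.TTheory GRing.Theory Num.Theory.
Local Open Scope ring_scope.

(* Indices {1,...,n} are represented by 'I_n = {0,...,n-1}. *)

Definition sJ (R : realFieldType) (n : nat) (lam : 'I_n -> R) (J : {set 'I_n}) : R :=
  \sum_(i in J) lam i.

(* delta(lambda): minimum of s_J/|J| over J with s_J > 0.  The seed value
   s_{setT}/n is itself one of the candidates whenever the total sum is
   positive, so under that (standing) hypothesis this is exactly the minimum. *)
Definition delta (R : realFieldType) (n : nat) (lam : 'I_n -> R) : R :=
  \big[Num.min/(sJ lam setT / n%:R)]_(J : {set 'I_n} | 0 < sJ lam J)
     (sJ lam J / (#|J|)%:R).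

(* N(lambda): minimum of |J| over J with s_J/|J| = delta (seed n >= every |J|). *)
Definition Nlam (R : realFieldType) (n : nat) (lam : 'I_n -> R) : nat :=
  \big[minn/n]_(J : {set 'I_n} | sJ lam J / (#|J|)%:R == delta lam) #|J|.

Definition pos_partition (R : realFieldType) (n : nat) (lam : 'I_n -> R) : Prop :=
  exists I1 I2 : {set 'I_n},
    [/\ [disjoint I1 & I2], I1 :|: I2 = setT, 0 < sJ lam I1 & 0 < sJ lam I2].

Definition perm_act (R : realFieldType) (n : nat) (s : {perm 'I_n}) (lam : 'I_n -> R)
  : 'I_n -> R := fun i => lam ((s^-1)%g i).

(* tau : i |-> i+1 (cyclically). *)
Definition tau (n : nat) : {perm 'I_n} := perm (can_inj (@ordSK n)).

Definition tau_pow (n : nat) (k : int) : {perm 'I_n} :=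
  match k with
  | Posz m => (tau n ^+ m)%g
  | Negz m => ((tau n ^+ m.+1)^-1)%g
  end.

(* mu > 0 : all partial sums mu_1 + ... + mu_i (i = 1..n) are positive. *)
Definition pos_vec (R : realFieldType) (n : nat) (mu : 'I_n -> R) : Prop :=
  forall i : 'I_n, 0 < \sum_(j < n | (j <= i)%N) mu j.

From HB Require Import structures.
From mathcomp Require Import all_boot all_order all_algebra all_fingroup.
From mathcomp Require Import lra zify.
Import Order.TTheory GRing.Theory Num.Theory.
Local Open Scope ring_scope.

(* (i) Let J realize delta, so s_J > 0.  Without a positive partition, |J| < n
   would give s_{~J} <= 0, hence s_T <= s_J = delta |J| < delta n <= s_T.
   Conversely, if setT is the only minimizer then delta = s_T / n, and for a
   positive partition (I, ~I) the bounds delta |I| <= s_I, delta |~I| <= s_{~I}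
   add up to an equality, so I is a smaller minimizer.
   (ii) With P the prefix sums of the periodic extension of lam, tau^-c lam > 0
   iff P c < P (c + i) for 0 < i <= n.  The last minimum c of P on [0, n) works
   because P (t + n) = P t + s_T > P t; and two such points d1 < d2 make both
   [d1, d2) and its complement positive. *)

(* bigD1 on the \big[minn/n] of Nlam needs an instance keyed on minn itself. *)
HB.instance Definition _ := SemiGroup.isComLaw.Build nat minn minnA minnC.

Section MeanMinimizers.

Context {R : realFieldType} {n : nat} (lam : 'I_n -> R).

Lemma sJ_setT : sJ lam setT = \sum_(i < n) lam i.
Proof. by apply: eq_bigl => i; rewrite inE. Qed.

Lemma sJ_setC (I : {set 'I_n}) : sJ lam (~: I) = sJ lam setT - sJ lam I.
Proof. by rewrite /sJ [in RHS](big_setID I) /= setTI setTD addrAC subrr add0r. Qed.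

Lemma card_gt0_sJ_gt0 {I : {set 'I_n}} : 0 < sJ lam I -> (0 < #|I|)%N.
Proof.
rewrite lt0n; apply: contraTneq => /cards0_eq ->.
by rewrite /sJ big_set0 ltxx.
Qed.

Lemma pos_partitionE :
  pos_partition lam <-> exists I, 0 < sJ lam I /\ 0 < sJ lam (~: I).
Proof.
split=> [[I1 [I2 [dis12 cov12 pos1 pos2]]] | [I [posI posC]]].
  suff defI2 : I2 = ~: I1 by exists I1; rewrite -defI2.
  rewrite -setTD -cov12 setDUl setDv set0U.
  by apply/esym/setDidPl; rewrite disjoint_sym.
by exists I, (~: I); rewrite -setI_eq0 setICr setUCr.
Qed.

Lemma delta_attained :
  0 < sJ lam setT -> exists2 J, 0 < sJ lam J & sJ lam J / #|J|%:R = delta lam.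
Proof.
move=> posT; rewrite /delta.
apply: (big_ind (fun x => exists2 J, 0 < sJ lam J & sJ lam J / #|J|%:R = x)).
- by exists setT; rewrite ?cardsT ?card_ord.
- by move=> x y [J posJ <-] [K posK <-]; rewrite /Num.min /Order.min; case: ifP;
    [exists J | exists K].
- by move=> J posJ; exists J.
Qed.

Lemma delta_mul_card_le {J : {set 'I_n}} :
  0 < sJ lam J -> delta lam * #|J|%:R <= sJ lam J.
Proof.
move=> posJ; have cardJ := card_gt0_sJ_gt0 posJ.
rewrite -ler_pdivlMr ?ltr0n // /delta (bigD1 J) //=.
by rewrite ge_min lexx.
Qed.

Lemma Nlam_le_card {J : {set 'I_n}} :
  sJ lam J / #|J|%:R = delta lam -> (Nlam lam <= #|J|)%N.
Proof. by move=> minJ; rewrite /Nlam (bigD1 J) ?minJ //= geq_minl. Qed.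

Lemma Nlam_eq_n :
  (forall J : {set 'I_n}, sJ lam J / #|J|%:R = delta lam -> (n <= #|J|)%N) ->
  Nlam lam = n.
Proof.
move=> minJ_large; apply/eqP; rewrite eqn_leq; apply/andP; split.
  apply: (big_ind (fun m => m <= n)%N) => // [m p|J _]; first by rewrite geq_min => ->.
  by rewrite -[n in (_ <= n)%N]card_ord max_card.
apply: (big_ind (fun m => n <= m)%N) => // [m p|J /eqP]; first by rewrite leq_min => ->.
exact: minJ_large.
Qed.

Lemma Nlam_eq_n_no_pos_partition :
  0 < sJ lam setT -> Nlam lam = n <-> ~ pos_partition lam.
Proof.
move=> posT; have [J0 posJ0 minJ0] := delta_attained posT.
have cardJ0 := card_gt0_sJ_gt0 posJ0.
have delta_gt0 : 0 < delta lam by rewrite -minJ0 divr_gt0 ?ltr0n.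
have deltaT := delta_mul_card_le posT; rewrite cardsT card_ord in deltaT.
split=> [Nn /pos_partitionE [I [posI posC]] | no_part].
  have J0T : J0 = setT.
    apply/eqP; rewrite eqEcard subsetT cardsT card_ord /=.
    by have := Nlam_le_card minJ0; rewrite Nn.
  have cardI := card_gt0_sJ_gt0 posI; have cardC := card_gt0_sJ_gt0 posC.
  have cardIC : (#|I| + #|~: I| = n)%N by rewrite cardsC card_ord.
  have sT : sJ lam setT = delta lam * n%:R.
    by rewrite -minJ0 J0T cardsT card_ord divfK // pnatr_eq0 -lt0n; lia.
  have sI : sJ lam I = delta lam * #|I|%:R.
    have := delta_mul_card_le posI; have := delta_mul_card_le posC.
    have nIC : n%:R = #|I|%:R + #|~: I|%:R :> R by rewrite -natrD cardIC.
    rewrite sJ_setC sT nIC; lra.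
  have minI : sJ lam I / #|I|%:R = delta lam by rewrite sI mulfK // pnatr_eq0 -lt0n.
  by have := Nlam_le_card minI; rewrite Nn; lia.
apply: Nlam_eq_n => J minJ; rewrite leqNgt; apply/negP => ltJn.
have cardJ : (0 < #|J|)%N.
  rewrite lt0n; apply: contraTneq delta_gt0 => card0.
  by rewrite -minJ card0 invr0 mulr0 ltxx.
have sJ_eq : sJ lam J = delta lam * #|J|%:R by rewrite -minJ divfK // pnatr_eq0 -lt0n.
have posJ : 0 < sJ lam J by rewrite sJ_eq mulr_gt0 ?ltr0n.
have sC : sJ lam (~: J) <= 0.
  by rewrite leNgt; apply/negP => posC; apply: no_part; apply/pos_partitionE; exists J.
have : (#|J|%:R : R) < n%:R by rewrite ltr_nat.
rewrite sJ_setC in sC; nra.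
Qed.

End MeanMinimizers.

Lemma tauX n (i : 'I_n) m : val ((tau n ^+ m)%g i) = ((i + m) %% n)%N.
Proof.
rewrite permX; elim: m => [|m IH] /=; first by rewrite addn0 modn_small.
by rewrite /tau permE /= IH -addn1 modnDml addn1 addnS.
Qed.

Lemma tau_order n : (tau n ^+ n = 1)%g.
Proof. by apply/permP=> i; apply/val_inj; rewrite tauX perm1 modnDr modn_small. Qed.

Lemma tau_pow_Nnat n (c : nat) : tau_pow n (- c%:Z) = ((tau n ^+ c)^-1)%g.
Proof. by case: c => [|c] /=; rewrite ?expg0 ?invg1. Qed.

Lemma tau_pow_expgV n' (k : int) : exists c : nat,
  [/\ (c < n'.+1)%N, (k = - c%:Z %[mod n'.+1])%Z
   & tau_pow n'.+1 k = ((tau _ ^+ c)^-1)%g].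
Proof.
have [c [kc tauc]] : exists c : nat,
    (k = - c%:Z %[mod n'.+1])%Z /\ tau_pow n'.+1 k = ((tau _ ^+ c)^-1)%g.
  case: k => m /=; last by exists m.+1; rewrite NegzE.
  exists (m * n')%N; split.
    apply/eqP; rewrite eqz_mod_dvd opprK -PoszD addnC -mulnSr PoszM.
    exact: dvdz_mull.
  apply/esym/eqP; rewrite eq_invg_mul -expgD -mulnSr mulnC expgM tau_order.
  by rewrite expg1n.
exists (c %% n'.+1)%N; rewrite ltn_mod expg_mod ?tau_order //.
by split=> //; rewrite -modz_nat modzNm.
Qed.

Lemma exists_last_argmin {d} {T : orderType d} (g : nat -> T) N : exists c,
  [/\ (c <= N)%N, forall t, (t <= N)%N -> (g c <= g t)%O &
      forall t, (c < t <= N)%N -> (g c < g t)%O].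
Proof.
elim: N => [|N [c [le_cN c_min c_last]]].
  exists 0%N; split=> // t; first by rewrite leqn0 => /eqP->.
  by move=> /andP[/leq_trans H/H].
have [le_gc|lt_cg] := leP (g N.+1) (g c).
  exists N.+1; split=> // t; last by move=> /andP[/leq_trans H/H]; rewrite ltnn.
  rewrite leq_eqVlt ltnS => /orP[/eqP->//|le_tN].
  exact: le_trans le_gc (c_min t le_tN).
exists c; split=> [|t|t]; first exact: leqW.
  by rewrite leq_eqVlt ltnS => /orP[/eqP->|/c_min]; first exact: ltW.
move=> /andP[lt_ct]; rewrite leq_eqVlt ltnS => /orP[/eqP->//|le_tN].
exact/c_last/andP.
Qed.

Section Rotations.

Context {R : realFieldType} {n' : nat} (lam : 'I_n'.+1 -> R).
Local Notation n := n'.+1.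

Definition lam_ext (j : nat) : R := lam (inord (j %% n)).

Definition psum (m : nat) : R := \sum_(0 <= j < m) lam_ext j.

Definition rot_pos (c : nat) : Prop := forall i : 'I_n, psum c < psum (c + i.+1).

Lemma lam_ext_tauX c (j : 'I_n) : lam ((tau n ^+ c)%g j) = lam_ext (j + c).
Proof. by congr (lam _); apply/val_inj; rewrite tauX /= inordK // ltn_mod. Qed.

Lemma psum_shift c m : \sum_(0 <= j < m) lam_ext (j + c) = psum (c + m) - psum c.
Proof.
rewrite /psum (@big_cat_nat _ _ _ c 0 (c + m)) ?leq_addr //= addrAC subrr add0r.
by rewrite -{2}[c]add0n big_addn addKn.
Qed.

Lemma psumDn m : psum (m + n) = psum m + psum n.
Proof.
apply/eqP; rewrite -subr_eq addnC -psum_shift; apply/eqP.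
by apply: eq_bigr => j _; rewrite /lam_ext modnDr.
Qed.

Lemma psum_ord m : (m <= n)%N -> psum m = \sum_(i < n | (i < m)%N) lam i.
Proof.
move=> le_mn; rewrite /psum (big_nat_widen _ _ _ _ _ le_mn) big_mkord.
by apply: eq_bigr => i _; rewrite /lam_ext modn_small // inord_val.
Qed.

Lemma psum_n : psum n = \sum_(i < n) lam i.
Proof. by rewrite psum_ord //; apply: eq_bigl => i; rewrite ltn_ord. Qed.

Lemma pos_vec_rot c : pos_vec (perm_act ((tau n ^+ c)^-1)%g lam) <-> rot_pos c.
Proof.
suff sum_rot (i : 'I_n) : \sum_(j < n | (j <= i)%N) perm_act ((tau n ^+ c)^-1)%g lam j
                 = psum (c + i.+1) - psum c.
  by split=> pos i; [rewrite -subr_gt0 -sum_rot | rewrite sum_rot subr_gt0].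
rewrite -psum_shift (big_nat_widen _ _ _ _ _ (ltn_ord i)) big_mkord.
by apply: eq_big => [j|j _]; rewrite ?ltnS // /perm_act invgK lam_ext_tauX.
Qed.

Lemma exists_rot_pos : 0 < \sum_(i < n) lam i -> exists2 c, (c < n)%N & rot_pos c.
Proof.
move=> posT; have [c [le_cn' c_min c_last]] := exists_last_argmin psum n'.
exists c => // i; have lt_in := ltn_ord i.
have [le_cin'|lt_n'ci] := leqP (c + i.+1) n'; first by apply: c_last; lia.
have -> : (c + i.+1 = (c + i.+1 - n) + n)%N by lia.
have le_psum : psum c <= psum (c + i.+1 - n) by apply: c_min; lia.
rewrite psumDn psum_n; lra.
Qed.

Lemma rot_pos_partition {d1 d2} :
  (d1 < d2 < n)%N -> rot_pos d1 -> rot_pos d2 -> pos_partition lam.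
Proof.
move=> /andP[lt12 lt2n] pos1 pos2; apply/pos_partitionE.
pose I := [set j : 'I_n | (d1 <= j < d2)%N].
have sI : psum d2 = psum d1 + sJ lam I.
  rewrite !psum_ord ?(ltnW lt2n) ?(leq_trans (ltnW lt12) (ltnW lt2n)) //.
  rewrite /sJ (bigID (fun i : 'I_n => (i < d1)%N)) /=.
  congr (_ + _); apply: eq_bigl => i; rewrite ?inE.
    by apply/andb_idl => lt_id1; apply: ltn_trans lt_id1 lt12.
  by rewrite -leqNgt andbC.
exists I; rewrite sJ_setC sJ_setT -psum_n; split.
  have lt_i : (d2 - d1.+1 < n)%N by lia.
  by have := pos1 (Ordinal lt_i); rewrite /= (_ : d1 + _ = d2)%N; [lra | lia].
have lt_i : (n' + d1 - d2 < n)%N by lia.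
by have := pos2 (Ordinal lt_i); rewrite /= (_ : d2 + _ = d1 + n)%N ?psumDn; [lra | lia].
Qed.

Lemma rot_pos_uniq {c1 c2} : ~ pos_partition lam ->
  (c1 < n)%N -> (c2 < n)%N -> rot_pos c1 -> rot_pos c2 -> c1 = c2.
Proof.
move=> no_part lt1 lt2 pos1 pos2.
case: (ltngtP c1 c2) => // [lt12|lt21]; case: no_part.
  by apply: (rot_pos_partition _ pos1 pos2); rewrite lt12.
by apply: (rot_pos_partition _ pos2 pos1); rewrite lt21.
Qed.

End Rotations.

Theorem mainTheorem12 (R : realFieldType) (n : nat) (lam : 'I_n -> R)
    (hpos : 0 < \sum_(i < n) lam i) :
  (Nlam lam = n <-> ~ pos_partition lam) /\
  (exists k : int, pos_vec (perm_act (tau_pow n k) lam)) /\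
  (~ pos_partition lam ->
     forall k1 k2 : int,
       pos_vec (perm_act (tau_pow n k1) lam) ->
       pos_vec (perm_act (tau_pow n k2) lam) ->
       (k1 = k2 %[mod n%:Z])%Z).
Proof.
case: n lam hpos => [|n'] lam hpos; first by rewrite big_ord0 ltxx in hpos.
split; first by apply: Nlam_eq_n_no_pos_partition; rewrite sJ_setT.
split.
  have [c _ posc] := exists_rot_pos lam hpos.
  by exists (- c%:Z); rewrite tau_pow_Nnat pos_vec_rot.
move=> no_part k1 k2.
have [c1 [lt1 k1c1 ->]] := tau_pow_expgV n' k1.
have [c2 [lt2 k2c2 ->]] := tau_pow_expgV n' k2.
rewrite !pos_vec_rot => pos1 pos2.
by rewrite k1c1 k2c2 (rot_pos_uniq lam no_part lt1 lt2 pos1 pos2).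
Qed.
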